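(* Let $q\in\mathbb{C}^*$ and let $v=(\underline t',q')=(k_0',k_1',u_0',u_1',q')\in\mathbb{C}^5$ be nonzero. Let $H'$ be the $\mathbb{C}[\epsilon]/(\epsilon^2)$-algebra $H(\underline 1+\epsilon\underline t';q+\epsilon q')$ taken modulo $\epsilon^2$. Then there is no isomorphism of $\mathbb{C}[\epsilon]/(\epsilon^2)$-algebras $H'\to H(\underline 1;q)\otimes_{\mathbb{C}}\mathbb{C}[\epsilon]/(\epsilon^2)$ which reduces to the identity of $H(\underline1;q)$ modulo $\epsilon$.
   Context: For parameters $k_0,k_1,u_0,u_1,q$ in a commutative ring in which they are invertible (with a chosen $q^{1/2}$), $H(k_0,k_1,u_0,u_1;q)$ is the algebra generated by $V_0,V_1,V_0^\vee,V_1^\vee$ with relations $(V_0-k_0)(V_0+k_0^{-1})=0$, $(V_1-k_1)(V_1+k_1^{-1})=0$, $(V_0^\vee-u_0)(V_0^\vee+u_0^{-1})=0$, $(V_1^\vee-u_1)(V_1^\vee+u_1^{-1})=0$, $V_1^\vee V_1V_0V_0^\vee=q^{-1/2}$. Here $\underline 1=(1,1,1,1)$, $\underline 1+\epsilon\underline t'=(1+\epsilon k_0',1+\epsilon k_1',1+\epsilon u_0',1+\epsilon u_1')$, and $(q+\epsilon q')^{1/2}=q^{1/2}(1+\epsilon q'/(2q))$. Note $H'/\epsilon H'=H(\underline1;q)$. *)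

From HB Require Import structures.
From mathcomp Require Import all_boot all_algebra.
From mathcomp Require Import reals complex.
Set Implicit Arguments. Unset Strict Implicit. Unset Printing Implicit Defensive.
Import GRing.Theory.
Local Open Scope ring_scope.

(* A C[eps]/(eps^2)-algebra is a C-algebra A
   together with a central element e (the image of eps) with e * e = 0;
   a scalar a + b eps of C[eps]/(eps^2) acts on A as  a *: x + b *: (e * x). *)

Definition central (C : fieldType) (A : algType C) (e : A) : Prop :=
  forall x : A, e * x = x * e.

Definition alg_hom (C : fieldType) (A B : algType C) (f : A -> B) : Prop :=
  [/\ forall x y, f (x + y) = f x + f y,
      forall x y, f (x * y) = f x * f y,
      f 1 = 1 &
      forall (c : C) x, f (c *: x) = c *: f x].

(* The defining relations of H(k0,k1,u0,u1;q) on elements X0 = V_0,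
   X1 = V_1, Y0 = V_0^vee, Y1 = V_1^vee, where the parameters k0, k0^{-1},
   ..., u1, u1^{-1} and q^{-1/2} are given as elements of the algebra. *)
Definition HRel (C : fieldType) (A : algType C)
    (k0 k0i k1 k1i u0 u0i u1 u1i qmh : A) (X0 X1 Y0 Y1 : A) : Prop :=
  [/\ (X0 - k0) * (X0 + k0i) = 0,
      (X1 - k1) * (X1 + k1i) = 0,
      (Y0 - u0) * (Y0 + u0i) = 0,
      (Y1 - u1) * (Y1 + u1i) = 0 &
      Y1 * X1 * X0 * Y0 = qmh].

(* Relations of H(1,1,1,1;q) over C, where s is the chosen q^{1/2}
   (so q^{-1/2} = s^-1). *)
Definition HRel1 (C : fieldType) (s : C) (A : algType C) (X0 X1 Y0 Y1 : A) :=
  HRel 1 1 1 1 1 1 1 1 (s^-1)%:A X0 X1 Y0 Y1.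

(* (H0, V0, V1, W0, W1) is (a presentation of) the C-algebra H(1;q):
   generated by V0, V1, W0 (= V_0^vee), W1 (= V_1^vee) subject only to the
   relations, i.e. it has the universal property of the presented algebra. *)
Definition presents_H1 (C : fieldType) (s : C)
    (H0 : algType C) (V0 V1 W0 W1 : H0) : Prop :=
  HRel1 s V0 V1 W0 W1 /\
  forall (B : algType C) (b0 b1 c0 c1 : B), HRel1 s b0 b1 c0 c1 ->
    (exists f : H0 -> B, alg_hom f /\
        [/\ f V0 = b0, f V1 = b1, f W0 = c0 & f W1 = c1]) /\
    (forall f g : H0 -> B, alg_hom f -> alg_hom g ->
        [/\ f V0 = b0, f V1 = b1, f W0 = c0 & f W1 = c1] ->
        [/\ g V0 = b0, g V1 = b1, g W0 = c0 & g W1 = c1] ->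
        forall x, f x = g x).

(* Element a + b eps of C[eps]/(eps^2) viewed in an algebra with eps |-> e. *)
Definition dual_el (C : fieldType) (A : algType C) (e : A) (a b : C) : A :=
  a%:A + b *: e.

(* Relations of H(1 + eps t'; q + eps q') over C[eps]/(eps^2), with
   k = 1 + eps k',  k^{-1} = 1 - eps k'  (in C[eps]/(eps^2)), and
   (q + eps q')^{1/2} = s (1 + eps q'/(2q)), whose inverse in C[eps]/(eps^2)
   is  q^{-1/2}_eps = s^{-1} - eps s^{-1} q'/(2q). *)
Definition HRelEps (C : fieldType) (q s k0' k1' u0' u1' q' : C)
    (A : algType C) (e : A) (X0 X1 Y0 Y1 : A) :=
  HRel (dual_el e 1 k0') (dual_el e 1 (- k0'))
       (dual_el e 1 k1') (dual_el e 1 (- k1'))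
       (dual_el e 1 u0') (dual_el e 1 (- u0'))
       (dual_el e 1 u1') (dual_el e 1 (- u1'))
       (dual_el e s^-1 (- (s^-1 * q' / (2%:R * q))))
       X0 X1 Y0 Y1.

(* (A, e, X0, X1, Y0, Y1) is (a presentation of) the C[eps]/(eps^2)-algebra
   H' = H(1 + eps t'; q + eps q'): universal among C[eps]/(eps^2)-algebras
   (B, eB) with elements satisfying the relations. *)
Definition presents_Heps (C : fieldType) (q s k0' k1' u0' u1' q' : C)
    (A : algType C) (e : A) (X0 X1 Y0 Y1 : A) : Prop :=
  [/\ central e, e * e = 0, HRelEps q s k0' k1' u0' u1' q' e X0 X1 Y0 Y1 &
  forall (B : algType C) (eB : B) (b0 b1 c0 c1 : B),
    central eB -> eB * eB = 0 ->
    HRelEps q s k0' k1' u0' u1' q' eB b0 b1 c0 c1 ->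
    (exists f : A -> B, alg_hom f /\ f e = eB /\
        [/\ f X0 = b0, f X1 = b1, f Y0 = c0 & f Y1 = c1]) /\
    (forall f g : A -> B, alg_hom f -> alg_hom g -> f e = eB -> g e = eB ->
        [/\ f X0 = b0, f X1 = b1, f Y0 = c0 & f Y1 = c1] ->
        [/\ g X0 = b0, g X1 = b1, g Y0 = c0 & g Y1 = c1] ->
        forall x, f x = g x)].

(* H0 (x)_C C[eps]/(eps^2) = H0 + eps H0, represented as pairs (a, b) = a + eps b,
   with its C[eps]/(eps^2)-algebra operations written out explicitly. *)
Definition dadd (C : fieldType) (H0 : algType C) (x y : H0 * H0) : H0 * H0 :=
  (x.1 + y.1, x.2 + y.2).
Definition dmul (C : fieldType) (H0 : algType C) (x y : H0 * H0) : H0 * H0 :=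
  (x.1 * y.1, x.1 * y.2 + x.2 * y.1).
Definition done_ (C : fieldType) (H0 : algType C) : H0 * H0 := (1, 0).
Definition dscale (C : fieldType) (H0 : algType C) (c : C) (x : H0 * H0) : H0 * H0 :=
  (c *: x.1, c *: x.2).
Definition deps (C : fieldType) (H0 : algType C) : H0 * H0 := (0, 1).

Definition dual_hom (C : fieldType) (A H0 : algType C) (e : A)
    (phi : A -> H0 * H0) : Prop :=
  [/\ forall x y, phi (x + y) = dadd (phi x) (phi y),
      forall x y, phi (x * y) = dmul (phi x) (phi y),
      phi 1 = done_ H0,
      forall (c : C) x, phi (c *: x) = dscale c (phi x) &
      phi e = deps H0].

From HB Require Import structures.
From mathcomp Require Import all_boot all_algebra.
From mathcomp Require Import reals complex.
From mathcomp Require Import boolp ring.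
Set Implicit Arguments. Unset Strict Implicit. Unset Printing Implicit Defensive.
Import GRing.Theory Num.Theory.
Local Open Scope ring_scope.

(* Suppose phi were such an isomorphism and write the images of the generators
   as V + eps a.  The eps-coefficients of the defining relations of H' are then
   linear relations in H(1;q) between the a's, the generators and (t', q').
   H(1;q) maps to a twisted group algebra of the group of affine maps
   y |-> +-y + t of Z^2, the generators going to the point reflections at
   (0,0), (1,0), (0,1), (1,1), and the twist being powers of q^{-1/2}.  This
   algebra carries linear forms tau that are invariant under conjugation by
   the generators, with tau(1) = a arbitrary and with values 1, s1, s2, s1 s2
   at the four generators, for any signs s1, s2.  Applying tau to the
   eps-coefficients eliminates the unknown a's and leaves
   q^{-1/2} (k0' + s1 k1' + s2 u0' + s1 s2 u1') = - a q^{-1/2} q' / (2q)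
   for all a, s1, s2, which forces t' = 0 and q' = 0. *)

(* The eps-coefficient of [(X - (1 + eps k)) (X + (1 - eps k))] at
   [X = v + eps a]. *)
Definition quadratic_deriv (F : fieldType) (B : algType F) (v a : B) (k : F) : B :=
  (v - 1) * (a - k%:A) + (a - k%:A) * (v + 1).

Lemma sqr1_exprz_reflect (F : fieldType) (s : F) (w t : int) :
  s * s = 1 -> s ^ (2 * w - t) = s ^ t.
Proof.
move=> ss; have s0 : s != 0.
  by apply: contra_eq_neq ss => ->; rewrite mul0r eq_sym oner_neq0.
have stst : s ^ t * s ^ t = 1 by rewrite -expfzMl ss exp1rz.
rewrite expfzDr // -exprz_exp.
have -> : s ^ (2 : int) = 1 by rewrite -exprnP expr2 ss.
by rewrite exp1rz mul1r -invr_expz -[LHS]mulr1 -stst mulKf // expfz_neq0.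
Qed.

Section TwistedReflections.
Variables (R : realType) (lam : R[i]).
Local Notation C := R[i].

(* The junk value at [lam = 0] makes [lam_powD] unconditional. *)
Definition lam_pow (z : int) : C := if lam == 0 then 1 else lam ^ z.

Lemma lam_powD a b : lam_pow (a + b) = lam_pow a * lam_pow b.
Proof.
by rewrite /lam_pow; case: eqP => [|/eqP lam0]; [rewrite mul1r | exact: expfzDr].
Qed.

Lemma lam_pow0 : lam_pow 0 = 1.
Proof. by rewrite /lam_pow; case: ifP. Qed.

(* [(t, b)] stands for the affine map [y |-> (-1)^b y + t] of [Z^2];
   [point_refl v] and [shift t] are the left multiplications by
   [y |-> v - y] and [y |-> y - t]. *)
Definition affZ2 := (int * int * bool)%type.
Local Notation fn := (affZ2 -> C).

Definition point_refl (v : int * int) (g : affZ2) : affZ2 :=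
  (v.1 - g.1.1, v.2 - g.1.2, ~~ g.2).
Definition shift (t : int * int) (g : affZ2) : affZ2 :=
  (g.1.1 - t.1, g.1.2 - t.2, g.2).

(* The twisting cocycle: it makes every [refl_op v] an involution and
   [refl_op (1, 1) * refl_op (1, 0) * refl_op (0, 0) * refl_op (0, 1)] the
   scalar [lam]. *)
Definition point_refl_exp (v : int * int) (g : affZ2) : int :=
  - (v.1 * v.2) - 2 * v.2 * (g.1.1 - v.1).
Definition shift_exp (t : int * int) (g : affZ2) : int :=
  - (2 * t.2 * (g.1.1 - t.1)).

Fixpoint word_exp (w : seq (int * int)) (g : affZ2) : int :=
  if w is v :: w' then point_refl_exp v g + word_exp w' (point_refl v g) else 0.
Fixpoint word_act (w : seq (int * int)) (g : affZ2) : affZ2 :=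
  if w is v :: w' then word_act w' (point_refl v g) else g.
Definition word_op (w : seq (int * int)) (f : fn) : fn :=
  fun g => lam_pow (word_exp w g) * f (word_act w g).

Lemma word_exp_cat w1 w2 g :
  word_exp (w1 ++ w2) g = word_exp w1 g + word_exp w2 (word_act w1 g).
Proof. by elim: w1 g => [|v w1 IH] g /=; rewrite ?add0r // IH addrA. Qed.

Lemma word_act_cat w1 w2 g : word_act (w1 ++ w2) g = word_act w2 (word_act w1 g).
Proof. by elim: w1 g => [|v w1 IH] g /=. Qed.

Lemma word_op_cat w1 w2 f g : word_op (w1 ++ w2) f g = word_op w1 (word_op w2 f) g.
Proof. by rewrite /word_op word_exp_cat word_act_cat lam_powD mulrA. Qed.

Lemma word_affine w : exists c t (b : bool),
  (forall g, word_act w g = if b then point_refl t g else shift t g) /\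
  (forall g, word_exp w g = c + (if b then point_refl_exp t g else shift_exp t g)).
Proof.
elim: w => [|v w [c [t [b [Hact Hexp]]]]].
  exists 0, (0, 0), false; split => [[[g1 g2] b]|g] /=.
    by rewrite /shift /= !subr0.
  by rewrite /shift_exp /=; ring.
case: b Hact Hexp => Hact Hexp.
  exists (c - v.1 * v.2 - t.1 * t.2 + 2 * v.2 * t.1), (v.1 - t.1, v.2 - t.2), false.
  split => [[[g1 g2] b]|g] /=.
    by rewrite Hact /point_refl /shift /= negbK; congr (_, _, _); ring.
  by rewrite Hexp /point_refl_exp /shift_exp /point_refl /=; ring.
exists (c + t.1 * v.2 + t.1 * t.2 - v.1 * t.2), (v.1 - t.1, v.2 - t.2), true.
split => [[[g1 g2] b]|g] /=.
  by rewrite Hact /point_refl /shift /=; congr (_, _, _); ring.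
by rewrite Hexp /point_refl_exp /shift_exp /point_refl /=; ring.
Qed.

Definition word_spanned (x : fn -> fn) : Prop :=
  exists l : seq (C * seq (int * int)),
    forall f g, x f g = \sum_(p <- l) p.1 * word_op p.2 f g.

Lemma word_spanned_add_fun {x} f h g : word_spanned x ->
  x (fun t => f t + h t) g = x f g + x h g.
Proof.
case=> l hl; rewrite !hl -big_split /=; apply: eq_bigr => p _.
by rewrite /word_op; ring.
Qed.

Lemma word_spanned_scale_fun {x} c f g : word_spanned x ->
  x (fun t => c * f t) g = c * x f g.
Proof.
case=> l hl; rewrite !hl mulr_sumr; apply: eq_bigr => p _.
by rewrite /word_op; ring.
Qed.

Lemma word_spanned0 : word_spanned (fun f g => 0).
Proof. by exists [::] => f g; rewrite big_nil. Qed.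

Lemma word_spanned_id : word_spanned id.
Proof. by exists [:: (1, [::])] => f g; rewrite big_seq1 /word_op /= lam_pow0 !mul1r. Qed.

Lemma word_spanned_word w : word_spanned (word_op w).
Proof. by exists [:: (1, w)] => f g; rewrite big_seq1 mul1r. Qed.

Lemma word_spannedN {x} : word_spanned x -> word_spanned (fun f g => - x f g).
Proof.
case=> l hl; exists [seq (- p.1, p.2) | p <- l] => f g.
by rewrite hl big_map -sumrN; apply: eq_bigr => p _ /=; ring.
Qed.

Lemma word_spannedD {x y} : word_spanned x -> word_spanned y ->
  word_spanned (fun f g => x f g + y f g).
Proof. by case=> l hl [l' hl']; exists (l ++ l') => f g; rewrite hl hl' big_cat. Qed.

Lemma word_spannedZ c {x} : word_spanned x -> word_spanned (fun f g => c * x f g).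
Proof.
case=> l hl; exists [seq (c * p.1, p.2) | p <- l] => f g.
by rewrite hl big_map mulr_sumr; apply: eq_bigr => p _ /=; ring.
Qed.

Lemma word_spanned_comp {x y} : word_spanned x -> word_spanned y ->
  word_spanned (fun f => x (y f)).
Proof.
case=> l hl [l' hl'].
exists [seq (p.1 * p'.1, p.2 ++ p'.2) | p <- l, p' <- l'] => f g.
rewrite hl big_allpairs_dep; apply: eq_bigr => p _.
rewrite {1}/word_op hl' !mulr_sumr; apply: eq_bigr => p' _ /=.
by rewrite word_op_cat {2}/word_op; ring.
Qed.

Record wspan := WSpan { wsval : fn -> fn; wsvalP : word_spanned wsval }.

Lemma wspan_ext (x y : wspan) : (forall f g, wsval x f g = wsval y f g) -> x = y.
Proof.
case: x y => [x px] [y py] /= exy.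
have {exy} exy : x = y by apply: funext => f; apply: funext => g.
by subst y; rewrite (Prop_irrelevance px py).
Qed.

HB.instance Definition _ := gen_eqMixin wspan.
HB.instance Definition _ := gen_choiceMixin wspan.

Definition wspan0 := WSpan word_spanned0.
Definition wspan_opp (x : wspan) := WSpan (word_spannedN (wsvalP x)).
Definition wspan_add (x y : wspan) := WSpan (word_spannedD (wsvalP x) (wsvalP y)).
Definition wspan1 := WSpan word_spanned_id.
Definition wspan_mul (x y : wspan) := WSpan (word_spanned_comp (wsvalP x) (wsvalP y)).
Definition wspan_scale (c : C) (x : wspan) := WSpan (word_spannedZ c (wsvalP x)).

Lemma wspan_addA : associative wspan_add.
Proof. by move=> x y z; apply: wspan_ext => f g /=; rewrite addrA. Qed.
Lemma wspan_addC : commutative wspan_add.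
Proof. by move=> x y; apply: wspan_ext => f g /=; rewrite addrC. Qed.
Lemma wspan_add0 : left_id wspan0 wspan_add.
Proof. by move=> x; apply: wspan_ext => f g /=; rewrite add0r. Qed.
Lemma wspan_addN : left_inverse wspan0 wspan_opp wspan_add.
Proof. by move=> x; apply: wspan_ext => f g /=; rewrite addNr. Qed.

HB.instance Definition _ :=
  GRing.isZmodule.Build wspan wspan_addA wspan_addC wspan_add0 wspan_addN.

Lemma wspan_mulA : associative wspan_mul.
Proof. by move=> x y z; apply: wspan_ext. Qed.
Lemma wspan_mul1 : left_id wspan1 wspan_mul.
Proof. by move=> x; apply: wspan_ext. Qed.
Lemma wspan_mulr1 : right_id wspan1 wspan_mul.
Proof. by move=> x; apply: wspan_ext. Qed.
Lemma wspan_mulDl : left_distributive wspan_mul wspan_add.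
Proof. by move=> x y z; apply: wspan_ext. Qed.
Lemma wspan_mulDr : right_distributive wspan_mul wspan_add.
Proof.
by move=> x y z; apply: wspan_ext => f g /=; rewrite (word_spanned_add_fun _ _ _ (wsvalP x)).
Qed.
Lemma wspan1_neq0 : wspan1 != wspan0.
Proof.
apply/eqP => /(congr1 (fun x => wsval x (fun _ => 1) (0, 0, false))) /= /eqP.
by rewrite oner_eq0.
Qed.

HB.instance Definition _ := GRing.Zmodule_isNzRing.Build wspan
  wspan_mulA wspan_mul1 wspan_mulr1 wspan_mulDl wspan_mulDr wspan1_neq0.

Lemma wspan_scaleA a b x : wspan_scale a (wspan_scale b x) = wspan_scale (a * b) x.
Proof. by apply: wspan_ext => f g /=; rewrite mulrA. Qed.
Lemma wspan_scale1 : left_id 1 wspan_scale.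
Proof. by move=> x; apply: wspan_ext => f g /=; rewrite mul1r. Qed.
Lemma wspan_scaleDr : right_distributive wspan_scale +%R.
Proof. by move=> a x y; apply: wspan_ext => f g /=; rewrite mulrDr. Qed.
Lemma wspan_scaleDl x : {morph wspan_scale^~ x : a b / a + b}.
Proof. by move=> a b; apply: wspan_ext => f g /=; rewrite mulrDl. Qed.

HB.instance Definition _ := GRing.Zmodule_isLmodule.Build C wspan
  wspan_scaleA wspan_scale1 wspan_scaleDr wspan_scaleDl.

Lemma wspan_scaleAl (a : C) (x y : wspan) : a *: (x * y) = (a *: x) * y.
Proof. by apply: wspan_ext. Qed.
HB.instance Definition _ := GRing.Lmodule_isLalgebra.Build C wspan wspan_scaleAl.

Lemma wspan_scaleAr (a : C) (x y : wspan) : a *: (x * y) = x * (a *: y).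
Proof.
by apply: wspan_ext => f g /=; rewrite (word_spanned_scale_fun _ _ _ (wsvalP x)).
Qed.
HB.instance Definition _ := GRing.Lalgebra_isAlgebra.Build C wspan wspan_scaleAr.

Definition refl_op v : wspan := WSpan (word_spanned_word [:: v]).

Lemma refl_op_sqr v : refl_op v * refl_op v = 1.
Proof.
apply: wspan_ext => f [[g1 g2] b] /=.
rewrite /word_op /= !addr0 mulrA -lam_powD /point_refl /= negbK.
have -> : v.1 - (v.1 - g1) = g1 by ring.
have -> : v.2 - (v.2 - g2) = g2 by ring.
by rewrite (_ : _ + _ = 0) ?lam_pow0 ?mul1r //; rewrite /point_refl_exp /=; ring.
Qed.

Lemma refl_op_prod : lam != 0 ->
  refl_op (1, 1) * refl_op (1, 0) * refl_op (0, 0) * refl_op (0, 1) = lam%:A.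
Proof.
move=> lam0; apply: wspan_ext => f [[g1 g2] b] /=.
rewrite /word_op /= !addr0 /point_refl /= !negbK.
have -> : 0 - (0 - (1 - (1 - g1))) = g1 by ring.
have -> : 1 - (0 - (0 - (1 - g2))) = g2 by ring.
rewrite !mulrA -!lam_powD; congr (_ * _).
rewrite /lam_pow (negbTE lam0) -[RHS]expr1z; congr (_ ^ _).
by rewrite /point_refl_exp /=; ring.
Qed.

Definition base_pt : affZ2 := (0, 0, false).

(* As a form on the twisted group algebra, [refl_trace a s1 s2] has weight [a]
   at the identity, [0] at the other translations and a twisted sign character
   at the reflections. *)
Definition trace_weight (a s1 s2 : C) (g : affZ2) : C :=
  if g.2 then lam_pow (- (g.1.1 * g.1.2)) * (s1 ^ g.1.1 * s2 ^ g.1.2)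
  else if (g.1.1 == 0) && (g.1.2 == 0) then a else 0.

Definition refl_trace (a s1 s2 : C) (x : wspan) : C :=
  wsval x (trace_weight a s1 s2) base_pt.

Lemma refl_trace1 a s1 s2 : refl_trace a s1 s2 1 = a.
Proof. by []. Qed.

Lemma refl_trace_refl a s1 s2 v : refl_trace a s1 s2 (refl_op v) = s1 ^ v.1 * s2 ^ v.2.
Proof.
rewrite /refl_trace /= /word_op /= addr0 /trace_weight /point_refl /= !subr0 mulrA -lam_powD.
by rewrite (_ : _ + _ = 0) ?lam_pow0 ?mul1r //; rewrite /point_refl_exp /=; ring.
Qed.

Section SignedTrace.
Variables (a s1 s2 : C).
Hypotheses (s1_sqr : s1 * s1 = 1) (s2_sqr : s2 * s2 = 1).

(* Conjugating by a reflection replaces the word's affine map by its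
   conjugate; the twist and [sqr1_exprz_reflect] absorb the change. *)
Lemma word_op_conj v w :
  word_op (v :: w ++ [:: v]) (trace_weight a s1 s2) base_pt =
  word_op w (trace_weight a s1 s2) base_pt.
Proof.
rewrite /word_op /= word_exp_cat word_act_cat /= addr0.
have [c [t [b [Hact Hexp]]]] := word_affine w.
rewrite !Hact !Hexp; case: b {Hact Hexp}.
  rewrite /trace_weight /point_refl /= !subr0.
  have -> : v.1 - (t.1 - v.1) = 2 * v.1 - t.1 by ring.
  have -> : v.2 - (t.2 - v.2) = 2 * v.2 - t.2 by ring.
  rewrite !sqr1_exprz_reflect // !mulrA -!lam_powD; congr (lam_pow _ * _ * _).
  by rewrite /point_refl_exp /=; ring.
rewrite /trace_weight /point_refl /shift /= !subr0.
have -> : v.1 - (v.1 - t.1) = t.1 by ring.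
have -> : v.2 - (v.2 - t.2) = t.2 by ring.
rewrite !sub0r !oppr_eq0.
case: ifP => [/andP[/eqP t1_0 /eqP t2_0]|]; last by rewrite !mulr0.
by congr (lam_pow _ * _); rewrite /point_refl_exp /shift_exp /= t1_0 t2_0; ring.
Qed.

Lemma refl_trace_conj v x :
  refl_trace a s1 s2 (refl_op v * x * refl_op v) = refl_trace a s1 s2 x.
Proof.
rewrite /refl_trace /=; case: (wsvalP x) => l hl.
rewrite /word_op /= hl [in RHS]hl mulr_sumr; apply: eq_bigr => p _.
have := word_op_conj v p.2; rewrite /word_op /= word_exp_cat word_act_cat /= addr0 => <-.
by rewrite !addr0 (lam_powD (point_refl_exp v base_pt)) (lam_powD (word_exp p.2 _)); ring.
Qed.

End SignedTrace.

End TwistedReflections.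

Lemma refl_op_HRel1 (R : realType) (s : R[i]) : s != 0 ->
  HRel1 s (refl_op s^-1 (0, 0)) (refl_op s^-1 (1, 0))
          (refl_op s^-1 (0, 1)) (refl_op s^-1 (1, 1)).
Proof.
move=> s0; have sqr1_rel v : (refl_op s^-1 v - 1) * (refl_op s^-1 v + 1) = 0.
  by rewrite mulrDr mulr1 !mulrBl !mul1r refl_op_sqr addrA subrK subrr.
by split; rewrite ?sqr1_rel // refl_op_prod // invr_neq0.
Qed.

Section ConjugationInvariantForm.
Variables (F : numFieldType) (B : algType F) (tau : B -> F).
Hypotheses (tauD : forall x y, tau (x + y) = tau x + tau y)
           (tauZ : forall c x, tau (c *: x) = c * tau x).

Definition conj_invariant (g : B) := forall y, tau (g * y * g) = tau y.

Lemma invariant_form_quadratic_deriv (v a : B) (k : F) :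
  v * v = 1 -> conj_invariant v -> quadratic_deriv v a k = 0 ->
  tau (a * v) = k * tau v.
Proof.
move=> vv inv_v E.
have tau0 : tau 0 = 0 by rewrite -(scale0r 0) tauZ mul0r.
have tauN x : tau (- x) = - tau x by rewrite -scaleN1r tauZ mulN1r.
have va_av : tau (v * a) = tau (a * v).
  by rewrite -[RHS]inv_v !mulrA -(mulrA _ v v) vv mulr1.
(* The relation expands to [v a + a v = 2 k v]. *)
move: E; rewrite /quadratic_deriv !(mulrDr, mulrDl, mulrBr, mulrBl, mulrN, mulNr, mul1r, mulr1, mulr_algl, mulr_algr).
move=> /(congr1 tau); rewrite !(tauD, tauN, tauZ) tau0 va_av => E.
have : 2%:R * (tau (a * v) - k * tau v) = 0 by rewrite -[RHS]E; ring.
by move/eqP; rewrite mulf_eq0 pnatr_eq0 /= subr_eq0 => /eqP.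
Qed.

Lemma invariant_form_first_order (v0 v1 w0 w1 a0 a1 b0 b1 : B) (k0 k1 u0 u1 lam d : F) :
  v0 * v0 = 1 -> v1 * v1 = 1 -> w0 * w0 = 1 -> w1 * w1 = 1 ->
  conj_invariant v0 -> conj_invariant v1 -> conj_invariant w0 -> conj_invariant w1 ->
  w1 * v1 * v0 * w0 = lam%:A ->
  quadratic_deriv v0 a0 k0 = 0 -> quadratic_deriv v1 a1 k1 = 0 ->
  quadratic_deriv w0 b0 u0 = 0 -> quadratic_deriv w1 b1 u1 = 0 ->
  w1 * v1 * v0 * b0 + w1 * v1 * a0 * w0 + w1 * a1 * v0 * w0 + b1 * v1 * v0 * w0 = d%:A ->
  lam * (k0 * tau v0 + k1 * tau v1 + u0 * tau w0 + u1 * tau w1) = d * tau 1.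
Proof.
move=> v0v0 v1v1 w0w0 w1w1 iv0 iv1 iw0 iw1 prod Q0 Q1 Q2 Q3 E.
have P1 : v1 * v0 * w0 = lam *: w1.
  by have := congr1 (fun z => w1 * z) prod; rewrite !mulrA w1w1 mul1r mulr_algr.
have P2 : w1 * v1 * v0 = lam *: w0.
  by have := congr1 (fun z => z * w0) prod; rewrite -mulrA w0w0 mulr1 mulr_algl.
have P3 : v0 * w0 = lam *: (v1 * w1).
  by have := congr1 (fun z => v1 * z) P1; rewrite !mulrA v1v1 mul1r -scalerAr.
have e0 : w1 * v1 * v0 * b0 = lam *: (w0 * b0) by rewrite P2 -scalerAl.
have e1 : w1 * v1 * a0 * w0 = lam *: (w1 * (v1 * (a0 * v0) * v1) * w1).
  have -> : w0 = v0 * (v0 * w0) by rewrite mulrA v0v0 mul1r.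
  by rewrite P3 -!scalerAr !mulrA.
have e2 : w1 * a1 * v0 * w0 = lam *: (w1 * (a1 * v1) * w1).
  by rewrite -mulrA P3 -!scalerAr !mulrA.
have e3 : b1 * v1 * v0 * w0 = lam *: (b1 * w1).
  by rewrite -(mulrA b1) -(mulrA b1) P1 -scalerAr.
have w0b0 : tau (w0 * b0) = tau (b0 * w0).
  by rewrite -[RHS]iw0 !mulrA -(mulrA _ w0 w0) w0w0 mulr1.
move: E; rewrite e0 e1 e2 e3 => /(congr1 tau); rewrite !tauD !tauZ iw1 iv1 iw1 w0b0.
rewrite (invariant_form_quadratic_deriv v0v0 iv0 Q0) (invariant_form_quadratic_deriv v1v1 iv1 Q1).
rewrite (invariant_form_quadratic_deriv w0w0 iw0 Q2) (invariant_form_quadratic_deriv w1w1 iw1 Q3).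
by move=> <-; ring.
Qed.

End ConjugationInvariantForm.

Section AlgHom.
Variables (F : fieldType) (A B : algType F) (f : A -> B).
Hypothesis f_hom : alg_hom f.

Lemma alg_hom_alg c : f c%:A = c%:A.
Proof. by case: f_hom => _ _ f1 fZ; rewrite fZ f1. Qed.

Lemma alg_hom0 : f 0 = 0.
Proof. by rewrite -(scale0r 1) alg_hom_alg scale0r. Qed.

Lemma alg_homN x : f (- x) = - f x.
Proof. by case: f_hom => _ _ _ fZ; rewrite -scaleN1r fZ scaleN1r. Qed.

Lemma alg_hom_quadratic_deriv v a k :
  f (quadratic_deriv v a k) = quadratic_deriv (f v) (f a) k.
Proof.
case: f_hom => fD fM f1 _.
by rewrite /quadratic_deriv !(fD, fM, alg_homN, alg_hom_alg, f1).
Qed.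

End AlgHom.

Section DualHom.
Variables (F : fieldType) (A H0 : algType F) (e : A) (phi : A -> H0 * H0).
Hypothesis phi_hom : dual_hom e phi.

Lemma dual_homD x y : phi (x + y) = ((phi x).1 + (phi y).1, (phi x).2 + (phi y).2).
Proof. by case: phi_hom. Qed.

Lemma dual_hom_fstM x y : (phi (x * y)).1 = (phi x).1 * (phi y).1.
Proof. by case: phi_hom => _ -> _ _ _. Qed.

Lemma dual_hom_sndM x y :
  (phi (x * y)).2 = (phi x).1 * (phi y).2 + (phi x).2 * (phi y).1.
Proof. by case: phi_hom => _ -> _ _ _. Qed.

Lemma dual_hom0 : phi 0 = (0, 0).
Proof. by case: phi_hom => _ _ _ phiZ _; rewrite -(scale0r 0) phiZ /dscale !scale0r. Qed.

Lemma dual_homN x : phi (- x) = (- (phi x).1, - (phi x).2).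
Proof. by case: phi_hom => _ _ _ phiZ _; rewrite -scaleN1r phiZ /dscale !scaleN1r. Qed.

Lemma dual_hom_dual_el a b : phi (dual_el e a b) = (a%:A, b%:A).
Proof.
case: phi_hom => phiD _ phi1 phiZ phie.
by rewrite /dual_el phiD !phiZ phi1 phie /dadd /dscale /= !scaler0 addr0 add0r.
Qed.

Lemma dual_hom_quadratic_deriv x k :
  (phi ((x - dual_el e 1 k) * (x + dual_el e 1 (- k)))).2 =
  quadratic_deriv (phi x).1 (phi x).2 k.
Proof.
by rewrite dual_hom_sndM !(dual_homD x) dual_homN !dual_hom_dual_el /= scale1r scaleNr.
Qed.

Lemma dual_hom_product_deriv x1 x2 x3 x4 :
  (phi (x1 * x2 * x3 * x4)).2 =
  (phi x1).1 * (phi x2).1 * (phi x3).1 * (phi x4).2 +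
  (phi x1).1 * (phi x2).1 * (phi x3).2 * (phi x4).1 +
  (phi x1).1 * (phi x2).2 * (phi x3).1 * (phi x4).1 +
  (phi x1).2 * (phi x2).1 * (phi x3).1 * (phi x4).1.
Proof. by rewrite !dual_hom_sndM !dual_hom_fstM !mulrDl !addrA. Qed.

Lemma dual_hom_first_order (q s k0' k1' u0' u1' q' : F) (X0 X1 Y0 Y1 : A) :
  HRelEps q s k0' k1' u0' u1' q' e X0 X1 Y0 Y1 ->
  [/\ quadratic_deriv (phi X0).1 (phi X0).2 k0' = 0,
      quadratic_deriv (phi X1).1 (phi X1).2 k1' = 0,
      quadratic_deriv (phi Y0).1 (phi Y0).2 u0' = 0,
      quadratic_deriv (phi Y1).1 (phi Y1).2 u1' = 0 &
      (phi Y1).1 * (phi X1).1 * (phi X0).1 * (phi Y0).2 +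
      (phi Y1).1 * (phi X1).1 * (phi X0).2 * (phi Y0).1 +
      (phi Y1).1 * (phi X1).2 * (phi X0).1 * (phi Y0).1 +
      (phi Y1).2 * (phi X1).1 * (phi X0).1 * (phi Y0).1 =
      (- (s^-1 * q' / (2%:R * q)))%:A].
Proof.
case=> R0 R1 R2 R3 R4.
by split; rewrite -?dual_hom_quadratic_deriv -?dual_hom_product_deriv
  ?R0 ?R1 ?R2 ?R3 ?R4 ?dual_hom0 ?dual_hom_dual_el.
Qed.

End DualHom.

Lemma first_order_constraint (R : realType) (s k0' k1' u0' u1' d : R[i])
    (H0 : algType R[i]) (V0 V1 W0 W1 a0 a1 b0 b1 : H0) :
  s != 0 -> presents_H1 s V0 V1 W0 W1 ->
  quadratic_deriv V0 a0 k0' = 0 -> quadratic_deriv V1 a1 k1' = 0 ->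
  quadratic_deriv W0 b0 u0' = 0 -> quadratic_deriv W1 b1 u1' = 0 ->
  W1 * V1 * V0 * b0 + W1 * V1 * a0 * W0 + W1 * a1 * V0 * W0 + b1 * V1 * V0 * W0 = d%:A ->
  forall a s1 s2 : R[i], s1 * s1 = 1 -> s2 * s2 = 1 ->
  s^-1 * (k0' + k1' * s1 + u0' * s2 + u1' * (s1 * s2)) = d * a.
Proof.
move=> s0 [_ univ] Q0 Q1 Q2 Q3 E a s1 s2 sq1 sq2.
have [[f [f_hom [fV0 fV1 fW0 fW1]]] _] := univ _ _ _ _ _ (refl_op_HRel1 s0).
have Qf v b k : quadratic_deriv v b k = 0 -> quadratic_deriv (f v) (f b) k = 0.
  by move=> Qv; rewrite -alg_hom_quadratic_deriv // Qv alg_hom0.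
move: (Qf _ _ _ Q0) (Qf _ _ _ Q1) (Qf _ _ _ Q2) (Qf _ _ _ Q3) (congr1 f E).
case: (f_hom) => fD fM _ _; rewrite !(fD, fM) alg_hom_alg // fV0 fV1 fW0 fW1.
move=> {}Q0 {}Q1 {}Q2 {}Q3 {}E.
pose tau := refl_trace (lam := s^-1) a s1 s2.
have tauD x y : tau (x + y) = tau x + tau y by [].
have tauZ c x : tau (c *: x) = c * tau x by [].
have inv v : conj_invariant tau (refl_op s^-1 v) := refl_trace_conj a sq1 sq2 v.
have sqr v := refl_op_sqr s^-1 v.
have := invariant_form_first_order tauD tauZ (sqr _) (sqr _) (sqr _) (sqr _)
  (inv _) (inv _) (inv _) (inv _) (refl_op_prod (invr_neq0 s0)) Q0 Q1 Q2 Q3 E.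
by rewrite /tau !refl_trace_refl refl_trace1 /= !expr0z !expr1z !mulr1 !mul1r.
Qed.

Lemma sign_combination_eq0 (F : numFieldType) (k0 k1 u0 u1 : F) :
  (forall s1 s2 : F, s1 * s1 = 1 -> s2 * s2 = 1 ->
     k0 + k1 * s1 + u0 * s2 + u1 * (s1 * s2) = 0) ->
  [/\ k0 = 0, k1 = 0, u0 = 0 & u1 = 0].
Proof.
pose z (s1 s2 : F) := k0 + k1 * s1 + u0 * s2 + u1 * (s1 * s2).
move=> zs0; have [z11 zm1 z1m zmm] :
    [/\ z 1 1 = 0, z (-1) 1 = 0, z 1 (-1) = 0 & z (-1) (-1) = 0].
  by split; apply: zs0; rewrite ?mulrNN mulr1.
have mul4_eq0 (x : F) : x *+ 4 = 0 -> x = 0 by move/eqP; rewrite mulrn_eq0 => /eqP.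
split; apply: mul4_eq0.
- have -> : k0 *+ 4 = z 1 1 + z (-1) 1 + z 1 (-1) + z (-1) (-1) by rewrite /z; ring.
  by rewrite z11 zm1 z1m zmm !addr0.
- have -> : k1 *+ 4 = z 1 1 - z (-1) 1 + z 1 (-1) - z (-1) (-1) by rewrite /z; ring.
  by rewrite z11 zm1 z1m zmm !subr0 !addr0.
- have -> : u0 *+ 4 = z 1 1 + z (-1) 1 - z 1 (-1) - z (-1) (-1) by rewrite /z; ring.
  by rewrite z11 zm1 z1m zmm !subr0 !addr0.
have -> : u1 *+ 4 = z 1 1 - z (-1) 1 - z 1 (-1) + z (-1) (-1) by rewrite /z; ring.
by rewrite z11 zm1 z1m zmm !subr0 !addr0.
Qed.

Theorem lemma5p5 (R : realType) (q s k0' k1' u0' u1' q' : R[i]) :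
  q != 0 -> s ^+ 2 = q ->
  ~~ [&& k0' == 0, k1' == 0, u0' == 0, u1' == 0 & q' == 0] ->
  forall (H0 : algType R[i]) (V0 V1 W0 W1 : H0),
  presents_H1 s V0 V1 W0 W1 ->
  forall (A : algType R[i]) (e X0 X1 Y0 Y1 : A),
  presents_Heps q s k0' k1' u0' u1' q' e X0 X1 Y0 Y1 ->
  ~ exists phi : A -> H0 * H0,
      [/\ dual_hom e phi, bijective phi &
          [/\ (phi X0).1 = V0, (phi X1).1 = V1,
              (phi Y0).1 = W0 & (phi Y1).1 = W1]].
Proof.
move=> q0 sq_s v_neq0 H0 V0 V1 W0 W1 H1 A e X0 X1 Y0 Y1 [_ _ Heps _].
case=> phi [phi_hom _ [phiX0 phiX1 phiY0 phiY1]].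
have s0 : s != 0 by apply: contraNneq q0 => s0; rewrite -sq_s s0 expr0n.
have := dual_hom_first_order phi_hom Heps.
rewrite phiX0 phiX1 phiY0 phiY1 => -[Q0 Q1 Q2 Q3 E].
have constraint := first_order_constraint s0 H1 Q0 Q1 Q2 Q3 E.
have [k0'0 k1'0 u0'0 u1'0] : [/\ k0' = 0, k1' = 0, u0' = 0 & u1' = 0].
  apply: sign_combination_eq0 => s1 s2 sq1 sq2.
  move: (constraint 0 s1 s2 sq1 sq2) => /eqP.
  by rewrite mulr0 mulf_eq0 invr_eq0 (negbTE s0) => /eqP.
move: v_neq0 (constraint 1 1 1 (mulr1 1) (mulr1 1)).
rewrite k0'0 k1'0 u0'0 u1'0 !eqxx /= => q'_neq0.
rewrite !(mul0r, mulr0, addr0, mulr1) => /esym/eqP.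
rewrite oppr_eq0 !(mulf_eq0, invr_eq0) pnatr_eq0.
by rewrite (negbTE s0) (negbTE q0) (negbTE q'_neq0).
Qed.
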